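(* Let $x\in\mathbb{R}^n$ and let $\widehat{L}=L-P_{T_z}LP_{T_x^\perp}$ be its effective lifting operator. Then (i) $\widehat{L}$ has full column rank; (ii) for every $u\in\partial\|\cdot\|_{1,2}(Lx)$ (the subdifferential of $\|\cdot\|_{1,2}$ at the point $Lx$), one has $(P_{T_z}LP_{T_x^\perp})^\top u=0$ and $L^\top u=\widehat{L}^\top u$.
   Context: Let $n,N\in\mathbb{N}$, let $G_1,\dots,G_N\subseteq\{1,\dots,n\}$ be nonempty groups, possibly overlapping, with $\bigcup_iG_i=\{1,\dots,n\}$, and weights $w_i>0$. $x_G$ is the subvector of $x$ indexed by $G$ (increasing order). Let $p=\sum_i|G_i|$, partition $\{1,\dots,p\}$ into consecutive blocks $J_i=\{\sum_{j<i}|G_j|+1,\dots,\sum_{j\le i}|G_j|\}$, and define $L\in\mathbb{R}^{p\times n}$ by $(Lx)_{J_i}=w_ix_{G_i}$. For $z\in\mathbb{R}^p$, $\|z\|_{1,2}=\sum_i\|z_{J_i}\|$ (Euclidean); $u\in\partial\|\cdot\|_{1,2}(z)$ iff $u_{J_i}=z_{J_i}/\|z_{J_i}\|$ when $z_{J_i}\ne0$ and $\|u_{J_i}\|\le1$ when $z_{J_i}=0$. For $x\in\mathbb{R}^n$: $\mathcal{I}_x=\{t:x_{G_t}\ne0\}$; $\mathcal{E}_x=\{1,\dots,n\}\setminus\bigcup_{t\notin\mathcal{I}_x}G_t$, $T_x=\{x'\in\mathbb{R}^n:\mathrm{supp}(x')\subseteq\mathcal{E}_x\}$; $\mathcal{E}_z=\bigcup_{t\in\mathcal{I}_x}J_t$,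 $T_z=\{z'\in\mathbb{R}^p:\mathrm{supp}(z')\subseteq\mathcal{E}_z\}$. $P_T$ is the orthogonal (coordinate) projection onto $T$, $T^\perp$ the orthogonal complement. *)

From mathcomp Require Import all_boot all_order all_algebra.
Set Implicit Arguments. Unset Strict Implicit. Unset Printing Implicit Defensive.
Import Order.TTheory GRing.Theory Num.Theory.
Local Open Scope ring_scope.

Section GroupLasso.
Variables (R : rcfType) (n N : nat) (G : 'I_N -> {set 'I_n}) (w : 'I_N -> R).

(* Index set of the lifted space R^p: pairs (i, g) with g \in G i.  Its
   canonical enumeration (enum) is lexicographic in (i, g), so the
   k-th row corresponds to the k-th pair: the blocks J_i are consecutive
   and within a block the indices of G_i appear in increasing order. *)
Definition liftidx : {set 'I_N * 'I_n} := [set ij | ij.2 \in G ij.1].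

Definition p := #|liftidx|.

Definition rowpair (k : 'I_p) : 'I_N * 'I_n := enum_val k.
Definition grp (k : 'I_p) : 'I_N := (rowpair k).1.

Definition J (i : 'I_N) : {set 'I_p} := [set k | grp k == i].

(* the lifting operator L : (Lx)_{J_i} = w_i x_{G_i} *)
Definition Lop : 'M[R]_(p, n) :=
  \matrix_(k < p, j < n) (if (rowpair k).2 == j then w (grp k) else 0).

Definition coordproj m (S : {set 'I_m}) : 'M[R]_m :=
  diag_mx (\row_(i < m) (if i \in S then 1 else 0)).

Definition blocknorm (z : 'cV[R]_p) (i : 'I_N) : R :=
  Num.sqrt (\sum_(k in J i) z k 0 ^+ 2).

Definition block_nz (z : 'cV[R]_p) (i : 'I_N) : bool :=
  [exists k in J i, z k 0 != 0].

Definition subdiff12 (z u : 'cV[R]_p) : Prop :=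
  forall i : 'I_N,
    (block_nz z i -> forall k, k \in J i -> u k 0 = z k 0 / blocknorm z i) /\
    (~~ block_nz z i -> blocknorm u i <= 1).

Definition Ix (x : 'cV[R]_n) : {set 'I_N} :=
  [set t | [exists j in G t, x j 0 != 0]].

Definition Ex (x : 'cV[R]_n) : {set 'I_n} :=
  ~: (\bigcup_(t | t \notin Ix x) G t).

Definition Ez (x : 'cV[R]_n) : {set 'I_p} :=
  \bigcup_(t | t \in Ix x) J t.

(* P_{T_z} and P_{T_x^perp}; T_x^perp = {x' | supp x' \subset ~: E_x} *)
Definition PTz (x : 'cV[R]_n) : 'M[R]_p := coordproj (Ez x).
Definition PTxperp (x : 'cV[R]_n) : 'M[R]_n := coordproj (~: Ex x).

Definition Lhat (x : 'cV[R]_n) : 'M[R]_(p, n) :=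
  Lop - PTz x *m Lop *m PTxperp x.

End GroupLasso.

Arguments p {n N} G.
Arguments Lop {R n N} G w.
Arguments subdiff12 {R n N} G z u.
Arguments PTz {R n N} G x.
Arguments PTxperp {R n N} G x.
Arguments Lhat {R n N} G w x.

From mathcomp Require Import all_boot all_order all_algebra.

Set Implicit Arguments.
Unset Strict Implicit.
Unset Printing Implicit Defensive.

Import Order.TTheory GRing.Theory Num.Theory.
Local Open Scope ring_scope.

(* Row (t, j) of L has the single nonzero entry w_t, in column j.  The
   correction P_{T_z} L P_{T_x^perp} deletes exactly the rows with t in I_x and
   j outside E_x.  Every column j keeps a row: a group t outside I_x containing
   j if j is not in E_x, any group covering j otherwise; hence the rows of
   Lhat contain a multiple of every unit vector and Lhat has rank n.  A deleted
   row lies in a block J_t with t in I_x, where (Lx)_{J_t} <> 0, so u is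
   Lx / |(Lx)_{J_t}| there; and its entry w_t x_j vanishes since j lies in a
   group outside I_x.  So u is orthogonal to every deleted row. *)

Lemma row_full_unit_rows (F : fieldType) m n (A : 'M[F]_(m, n)) :
  (forall j, exists k, exists2 c, c != 0 & row k A = c *: delta_mx 0 j) ->
  row_full A.
Proof.
move=> unitA; rewrite -sub1mx; apply/row_subP => j; rewrite row1.
have [k [c c_neq0 rowAk]] := unitA j.
have -> : delta_mx 0 j = c^-1 *: row k A by rewrite rowAk scalerA mulVf ?scale1r.
exact/scalemx_sub/row_sub.
Qed.

Section GroupLassoLifting.
Variables (R : rcfType) (n N : nat) (G : 'I_N -> {set 'I_n}) (w : 'I_N -> R).
Variable x : 'cV[R]_n.

Lemma coordproj_mulmxE m l (S : {set 'I_m}) (A : 'M[R]_(m, l)) i j :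
  (coordproj R S *m A) i j = if i \in S then A i j else 0.
Proof. by rewrite mul_diag_mx !mxE; case: ifP; rewrite ?mul1r ?mul0r. Qed.

Lemma mulmx_coordprojE m l (S : {set 'I_m}) (A : 'M[R]_(l, m)) i j :
  (A *m coordproj R S) i j = if j \in S then A i j else 0.
Proof. by rewrite mul_mx_diag !mxE; case: ifP; rewrite ?mulr1 ?mulr0. Qed.

Lemma rowpair_onto t j : j \in G t -> exists k : 'I_(p G), rowpair k = (t, j).
Proof.
move=> Gtj; have liftidx_tj : (t, j) \in liftidx G by rewrite inE.
by exists (enum_rank_in liftidx_tj (t, j)); rewrite /rowpair enum_rankK_in.
Qed.

Lemma mem_Ez k : (k \in Ez G x) = (grp k \in Ix G x).
Proof.
rewrite /Ez; apply/bigcupP/idP => [[t Ixt]|Ixk]; first by rewrite inE => /eqP ->.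
by exists (grp k) => //; rewrite inE.
Qed.

Lemma notin_ExP j :
  reflect (exists2 t, t \notin Ix G x & j \in G t) (j \notin Ex G x).
Proof. by rewrite /Ex inE negbK; apply: (iffP bigcupP) => -[t]; exists t. Qed.

Lemma notin_Ex_eq0 j : j \notin Ex G x -> x j 0 = 0.
Proof.
case/notin_ExP => t; rewrite inE negb_exists => /forallP /(_ j) x_j Gtj.
by apply/eqP; move: x_j; rewrite Gtj negbK.
Qed.

Lemma Lop_mulmxE l (X : 'M[R]_(n, l)) k j :
  (Lop G w *m X) k j = w (grp k) * X (rowpair k).2 j.
Proof.
rewrite mxE (bigD1 (rowpair k).2) //= big1 ?addr0; first by rewrite mxE eqxx.
by move=> i ne_i; rewrite mxE eq_sym (negbTE ne_i) mul0r.
Qed.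

Lemma PTzLPTxperpE k j :
  (PTz G x *m Lop G w *m PTxperp G x) k j =
  if (grp k \in Ix G x) && (j \notin Ex G x) then Lop G w k j else 0.
Proof.
rewrite mulmx_coordprojE coordproj_mulmxE mem_Ez inE.
by case: (grp k \in Ix G x); case: (j \in Ex G x).
Qed.

Lemma LhatE k j :
  Lhat G w x k j =
  if (grp k \in Ix G x) ==> (j \in Ex G x) then Lop G w k j else 0.
Proof.
rewrite /Lhat [LHS]mxE [X in _ + X]mxE PTzLPTxperpE /Lop mxE.
by case: (grp k \in Ix G x); case: (j \in Ex G x); rewrite /= ?subrr ?subr0.
Qed.

Hypothesis w_gt0 : forall t, 0 < w t.

Lemma block_nz_Lop t : t \in Ix G x -> block_nz (Lop G w *m x) t.
Proof.
rewrite inE => /existsP [j /andP [Gtj x_j]]; have [k rowk] := rowpair_onto Gtj.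
apply/existsP; exists k; rewrite inE /grp rowk eqxx Lop_mulmxE /grp rowk /=.
by rewrite mulf_neq0 // gt_eqF.
Qed.

Lemma subdiff12_Lop_eq0 u k :
  subdiff12 G (Lop G w *m x) u ->
  grp k \in Ix G x -> (rowpair k).2 \notin Ex G x -> u k 0 = 0.
Proof.
move=> subdiff_u Ixk Exk; have [u_block _] := subdiff_u (grp k).
rewrite (u_block (block_nz_Lop Ixk)) ?inE // Lop_mulmxE.
by rewrite notin_Ex_eq0 // mulr0 mul0r.
Qed.

Lemma tr_PTzLPTxperp_subdiff12 u :
  subdiff12 G (Lop G w *m x) u ->
  (PTz G x *m Lop G w *m PTxperp G x)^T *m u = 0.
Proof.
move=> subdiff_u; apply/colP => j; rewrite !mxE big1 // => k _.
rewrite mxE PTzLPTxperpE /Lop mxE.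
case: (eqVneq (rowpair k).2 j) => [<-|]; last by rewrite if_same mul0r.
case: ifP => [/andP [Ixk Exk]|]; last by rewrite mul0r.
by rewrite (subdiff12_Lop_eq0 subdiff_u) ?mulr0.
Qed.

Hypothesis cover : \bigcup_(t < N) G t = [set: 'I_n].

Lemma row_full_Lhat : row_full (Lhat G w x).
Proof.
apply: row_full_unit_rows => j.
have [t Gtj keep_tj] : exists2 t, j \in G t & (t \in Ix G x) ==> (j \in Ex G x).
  have [Exj | /notin_ExP [t Ixt Gtj]] := boolP (j \in Ex G x).
    have : j \in \bigcup_(t < N) G t by rewrite cover inE.
    by case/bigcupP => t _ Gtj; exists t; rewrite ?Exj ?implybT.
  by exists t; rewrite // (negbTE Ixt).
have [k rowk] := rowpair_onto Gtj.
exists k, (w t); first by rewrite gt_eqF.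
apply/rowP => i; rewrite [LHS]mxE LhatE !mxE /grp rowk /=.
by case: (eqVneq j i) => [<-|_]; rewrite ?keep_tj ?if_same ?mulr1 ?mulr0.
Qed.

End GroupLassoLifting.

Theorem proposition3p2 (R : rcfType) (n N : nat)
    (G : 'I_N -> {set 'I_n}) (w : 'I_N -> R)
    (HGne : forall i, G i != set0)
    (Hcover : \bigcup_(i < N) G i = [set: 'I_n])
    (Hw : forall i, 0 < w i)
    (x : 'cV[R]_n) :
  \rank (Lhat G w x) = n /\
  (forall u : 'cV[R]_(p G),
     subdiff12 G (Lop G w *m x) u ->
     (PTz G x *m Lop G w *m PTxperp G x)^T *m u = 0 /\
     (Lop G w)^T *m u = (Lhat G w x)^T *m u).
Proof.
split; first exact/eqP/(row_full_Lhat x Hw Hcover).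
move=> u subdiff_u; have orth_u := tr_PTzLPTxperp_subdiff12 Hw subdiff_u.
by split=> //; rewrite /Lhat linearB /= mulmxBl orth_u subr0.
Qed.
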